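(* Let $G$ be a graph such that $|F_e|\le 3$ for every edge $e$ of $G$, and let $u,v,w$ be an induced path on three vertices in $G$, with the sets $B_i$ and $N^{+}(x)$ defined from $u,v,w$ as in the context. Then $|N^{+}(x)|\le 2$ for every $x\in\bigcup_{i\ge 0}B_i$.
   Context: All graphs are finite, simple and undirected. For an edge $e$ of $G$, $F_e$ denotes the set of all edges $e'$ of $G$ such that $V(e)\cup V(e')$ induces a path on three vertices in $G$ (i.e., $e$ and $e'$ share exactly one endpoint and their other endpoints are non-adjacent). Let $u,v,w$ be an induced path on three vertices ($uv,vw\in E(G)$, $uw\notin E(G)$), and let $A=\{u,v,w\}$. Let $B$ be the set of vertices not in $A$ having exactly one or two neighbors in $A$; let $C$ be the set of vertices adjacent to all three vertices of $A$; let $D$ be the set of vertices not in $A\cup B\cup C$ having at least one neighbor in $C$. For $i\ge1$, $B_i$ is the set of vertices $x\notin A\cup B\cup C\cup D$ whose distance in $G$ to the set $B$ is exactly $i$; also $B_0=B$ and $B_{-1}=A$. For $i\ge 0$ and $x\in B_i$, $N^{+}(x)$, $N^{=}(x)$, $N^{-}(x)$ denote the sets of neighbors of $x$ in $B_{i+1}$, $B_i$, $B_{i-1}$ respectively. *)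

(* A finite simple graph = symmetric irreflexive rel on a finType. *)
From mathcomp Require Import all_boot.
Set Implicit Arguments. Unset Strict Implicit. Unset Printing Implicit Defensive.

Section Defs.
Variables (T : finType) (adj : rel T).

(* F_e for the edge e = ab: edges e' = {c,d} such that V(e) u V(e') induces P3,
   i.e. e' shares exactly one endpoint with e and the other endpoints are
   non-adjacent. *)
Definition Fe (a b : T) : {set {set T}} :=
  [set e' : {set T} | [exists c : T, exists d : T,
     [&& adj c d, e' == [set c; d] &
       ((c == a) && (d != b) && ~~ adj b d) ||
       ((c == b) && (d != a) && ~~ adj a d)]]].

Fixpoint within (k : nat) (S : {set T}) (x : T) : bool :=
  match k with
  | 0 => x \in S
  | k'.+1 => within k' S x || [exists y, adj x y && within k' S y]
  end.

Definition dist_eq (i : nat) (S : {set T}) (x : T) : bool :=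
  within i S x && ((i == 0) || ~~ within i.-1 S x).

Variables (u v w : T).
Definition setA : {set T} := [set u; v; w].
Definition nbA (x : T) : nat := #|[set y in setA | adj x y]|.
Definition setB : {set T} := [set x | (x \notin setA) && (0 < nbA x <= 2)].
Definition setC : {set T} := [set x | (x \notin setA) && (nbA x == 3)].
Definition setD : {set T} :=
  [set x | (x \notin setA :|: setB :|: setC) && [exists y in setC, adj x y]].

Definition Bi (i : nat) : {set T} :=
  if i is 0 then setB
  else [set x | (x \notin setA :|: setB :|: setC :|: setD) && dist_eq i setB x].

Definition Nplus (i : nat) (x : T) : {set T} := [set y in Bi i.+1 | adj x y].
End Defs.

(* For x in B_i we find an induced path a z x whose middle vertex z is neither
   in nor adjacent to B_(i+1): for i = 0 take z, a in A; for i = 1 take z in B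
   and a in A; for i >= 2 take z and a at distances i-1 and i-2 from B.
   Then {z, a} and every {x, y} with y in N^+(x) lie in F_(zx), so
   |N^+(x)| + 1 <= 3. *)
From mathcomp Require Import all_boot.

Set Implicit Arguments.
Unset Strict Implicit.
Unset Printing Implicit Defensive.

Section Graph.
Variables (T : finType) (adj : rel T).
Hypothesis adj_sym : symmetric adj.
Hypothesis adj_irr : irreflexive adj.

Lemma card_Fe_gt (z x a : T) (N : {set T}) :
  adj z x -> adj z a -> a != x -> ~~ adj x a ->
  {subset N <= [pred y | [&& adj x y, ~~ adj z y & y != z]]} ->
  #|N| < #|Fe adj z x|.
Proof.
move=> hzx hza hax hxa hN.
have hxz : x != z by apply: contraTneq hzx => ->; rewrite adj_irr.
have inj_pair : {in N &, injective (fun y => [set x; y])}.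
  move=> y1 y2 /hN/and3P[hxy1 _ _] _ e.
  have : y1 \in [set x; y2] by rewrite -e !inE eqxx orbT.
  by rewrite !inE => /orP[/eqP e1 | /eqP //]; rewrite e1 adj_irr in hxy1.
have za_new : [set z; a] \notin [set [set x; y] | y in N].
  apply/imsetP=> -[y _ e].
  have : x \in [set z; a] by rewrite e !inE eqxx.
  by rewrite !inE (negbTE hxz) eq_sym (negbTE hax).
have sub : [set z; a] |: [set [set x; y] | y in N] \subset Fe adj z x.
  apply/subsetP=> e; rewrite !inE => /orP[/eqP -> | /imsetP[y /hN/and3P[hxy hzy hyz] ->]].
    by apply/existsP; exists z; apply/existsP; exists a; rewrite hza !eqxx hax hxa.
  by apply/existsP; exists x; apply/existsP; exists y; rewrite hxy !eqxx hyz hzy orbT.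
by move: (subset_leq_card sub); rewrite cardsU1 za_new card_in_imset.
Qed.

Lemma withinS k S x : within adj k S x -> within adj k.+1 S x.
Proof. by move=> /= ->. Qed.

Lemma within_adj k S x y : adj x y -> within adj k S y -> within adj k.+1 S x.
Proof. by move=> hxy hy /=; apply/orP; right; apply/existsP; exists y; rewrite hxy. Qed.

Lemma withinSP k S x :
  within adj k.+1 S x -> ~~ within adj k S x -> exists2 z, adj x z & within adj k S z.
Proof. by move=> /= /orP[-> // | /existsP[z /andP[]]]; exists z. Qed.

Definition P3_ending_at (x : T) (S : {set T}) : Prop :=
  exists z a, [/\ adj z x, adj z a, a != x, ~~ adj x a &
                  {in S, forall y, ~~ adj z y && (y != z)}].

Lemma P3_ending_at_within k (S S' : {set T}) x :
  within adj k.+2 S x -> ~~ within adj k.+1 S x ->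
  {in S', forall y, ~~ within adj k.+2 S y} -> P3_ending_at x S'.
Proof.
move=> hx hxn hS'.
have [z hxz hz] := withinSP hx hxn.
have hzn : ~~ within adj k S z by apply: contra hxn; apply: within_adj.
have [a hza ha] := withinSP hz hzn.
exists z, a; split; first by rewrite adj_sym.
- exact: hza.
- by apply: contraNneq hxn => <-; apply: withinS.
- by apply: contra hxn => hxa; apply: within_adj hxa ha.
move=> y /hS' hy; apply/andP; split.
  by apply: contra hy => hzy; apply: within_adj hz; rewrite adj_sym.
by apply: contraNneq hy => ->; apply: withinS.
Qed.

Section InducedP3.
Variables (u v w : T).
Hypotheses (huv : adj u v) (hvw : adj v w) (hneq : u != w).

Local Notation A := (setA u v w).
Local Notation B := (setB adj u v w).
Local Notation B_ i := (Bi adj u v w i).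

Lemma card_setA : #|A| = 3.
Proof.
have huv' : u != v by apply: contraTneq huv => ->; rewrite adj_irr.
have hvw' : v != w by apply: contraTneq hvw => ->; rewrite adj_irr.
by rewrite /setA setUC cardsU1 cards2 huv' !inE negb_or ![w == _]eq_sym hneq hvw'.
Qed.

Lemma nbA_le3 x : nbA adj u v w x <= 3.
Proof. by rewrite -card_setA; apply/subset_leq_card/subsetP=> t; rewrite inE => /andP[]. Qed.

Lemma nbA_gt0 x : 0 < nbA adj u v w x -> exists2 t, t \in A & adj x t.
Proof. by rewrite card_gt0 => /set0Pn[t]; rewrite inE => /andP[]; exists t. Qed.

Lemma nbA_lt3 x : nbA adj u v w x < 3 -> exists2 t, t \in A & ~~ adj x t.
Proof.
move=> hlt; apply/exists_inP; apply: contraTT hlt => /exists_inPn all_adj.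
rewrite -leqNgt -card_setA; apply/subset_leq_card/subsetP=> t ht.
by rewrite inE ht -[adj x t]negbK all_adj.
Qed.

Lemma adj_middle t : t \in A -> t != v -> adj v t.
Proof. by rewrite !inE => /orP[/orP[] | ] /eqP -> //; rewrite ?eqxx // adj_sym. Qed.

Lemma mem_BiS k y : y \in B_ k.+1 ->
  [/\ y \notin A, {in A, forall t, ~~ adj y t}, within adj k.+1 B y & ~~ within adj k B y].
Proof.
rewrite inE /dist_eq 3!in_setU !negb_or => /andP[/andP[/andP[/andP[hA hB] hC] _] /andP[-> /= ->]].
split=> // t ht; apply: contraNN hC => hyt.
have hpos : 0 < nbA adj u v w y by rewrite card_gt0; apply/set0Pn; exists t; rewrite inE ht.
move: hB; rewrite inE hA hpos /= -ltnNge => h3.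
by rewrite inE hA eqn_leq nbA_le3.
Qed.

Lemma P3_ending_at_B0 x : x \in B -> P3_ending_at x (B_ 1).
Proof.
rewrite inE => /andP[hxA /andP[hpos hle2]].
have no_A_adj y : y \in B_ 1 -> {in A, forall t, ~~ adj t y && (y != t)}.
  case/mem_BiS=> hyA hyn _ _ t ht; rewrite adj_sym hyn //=.
  by apply: contraNneq hyA => ->.
have hxt t : t \in A -> t != x by move=> ht; apply: contraNneq hxA => <-.
have vA : v \in A by rewrite !inE eqxx orbT.
case hxv : (adj x v).
- have [t ht hnt] := nbA_lt3 hle2.
  have htv : t != v by apply: contraNneq hnt => ->.
  exists v, t; split; [by rewrite adj_sym | exact: adj_middle | exact: hxt | exact: hnt |].
  by move=> y /no_A_adj; apply.
- have [t ht hxt_adj] := nbA_gt0 hpos.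
  have htv : t != v by apply: contraTneq hxt_adj => ->; rewrite hxv.
  exists t, v; split; [by rewrite adj_sym | by rewrite adj_sym adj_middle | exact: hxt | by rewrite hxv |].
  by move=> y /no_A_adj; apply.
Qed.

Lemma P3_ending_at_B1 x : x \in B_ 1 -> P3_ending_at x (B_ 2).
Proof.
case/mem_BiS=> hxA hxnA hx hxB.
have [z hxz hzB] := withinSP hx hxB.
have [a haA hza] : exists2 a, a \in A & adj z a.
  by apply: nbA_gt0; move: hzB; rewrite /= inE => /andP[_ /andP[]].
exists z, a; split; [by rewrite adj_sym | exact: hza | by apply: contraNneq hxA => <- | exact: hxnA |].
move=> y /mem_BiS[_ _ _ hyn]; apply/andP; split.
  by apply: contra hyn => hzy; apply: within_adj hzB; rewrite adj_sym.
by apply: contraNneq hyn => ->; apply: withinS.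
Qed.

Lemma P3_ending_at_Bi i x : x \in B_ i -> P3_ending_at x (B_ i.+1).
Proof.
case: i => [|[|k]]; [exact: P3_ending_at_B0 | exact: P3_ending_at_B1 |].
case/mem_BiS=> _ _ hx hxn.
by apply: (P3_ending_at_within hx hxn) => y /mem_BiS[_ _ _ ->].
Qed.

End InducedP3.

End Graph.

Theorem lemma5 (T : finType) (adj : rel T)
  (adj_sym : symmetric adj) (adj_irr : irreflexive adj)
  (hF : forall a b : T, adj a b -> #|Fe adj a b| <= 3)
  (u v w : T) (huv : adj u v) (hvw : adj v w) (huw : ~~ adj u w) (hneq : u != w) :
  forall (i : nat) (x : T), x \in Bi adj u v w i -> #|Nplus adj u v w i x| <= 2.
Proof.
move=> i x /(P3_ending_at_Bi adj_sym adj_irr huv hvw hneq) [z [a [hzx hza hax hxa hS]]].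
rewrite -ltnS; apply: leq_trans (hF _ _ hzx).
apply: (card_Fe_gt adj_irr hzx hza hax hxa) => y.
by rewrite inE => /andP[/hS/andP[hzy hyz] hxy]; rewrite inE hxy hzy hyz.
Qed.
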